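(* Let $G$ be a graph on $n$ vertices with $n>2$ even, and let $k=n/2$. Then the complement map $\mathfrak{c}$ of $F_k(G)$ does not belong to $\iota(\operatorname{Aut}(G))=\{\iota(\phi):\phi\in\operatorname{Aut}(G)\}$.
   Context: $F_k(G)$ is the graph on the $k$-subsets of $V(G)$ in which $A,B$ are adjacent iff $A\triangle B$ is an edge of $G$. For $\phi\in\operatorname{Aut}(G)$, $\iota(\phi)$ is the automorphism of $F_k(G)$ mapping $A$ to $\{\phi(v):v\in A\}$. The complement map $\mathfrak{c}$ sends each $k$-subset $A$ of $V(G)$ to $V(G)\setminus A$; when $k=n/2$ it is an automorphism of $F_k(G)$. *)

From mathcomp Require Import all_boot all_fingroup.
Set Implicit Arguments. Unset Strict Implicit. Unset Printing Implicit Defensive.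

Definition simple_graph (V : finType) (e : rel V) : Prop :=
  symmetric e /\ irreflexive e.

Definition is_graph_aut (V : finType) (e : rel V) (phi : {perm V}) : Prop :=
  forall u v, e (phi u) (phi v) = e u v.

(* Vertices of the token graph F_k(G): k-subsets of V. *)
Definition ksubset (V : finType) (k : nat) (A : {set V}) : bool := #|A| == k.

Definition token_adj (V : finType) (e : rel V) (A B : {set V}) : bool :=
  [exists u, exists v, e u v && ((A :\: B) :|: (B :\: A) == [set u; v])].

Definition iota_map (V : finType) (phi : {perm V}) (A : {set V}) : {set V} :=
  phi @: A.

Definition compl_map (V : finType) (A : {set V}) : {set V} := ~: A.

From mathcomp Require Import all_boot all_fingroup.
Set Implicit Arguments. Unset Strict Implicit.

(* The complement map fails to be induced by any self-map of the vertices, let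
   alone an automorphism: pick a vertex x and a k-subset A containing both x
   and phi x, which is possible as soon as k >= 2.  Then phi x lies in phi(A)
   and in A, so phi(A) cannot be the complement of A. *)

Lemma exists_subset_card (T : finType) (A : {set T}) m :
  m <= #|A| -> exists2 B : {set T}, B \subset A & #|B| = m.
Proof.
case/card_geqP=> s [s_uniq s_size sA].
exists [set x in s]; first by apply/subsetP=> x; rewrite inE => /sA.
by rewrite cardsE (card_uniqP s_uniq).
Qed.

Lemma exists_superset_card (T : finType) (S : {set T}) k :
  #|S| <= k <= #|T| -> exists2 A : {set T}, S \subset A & #|A| = k.
Proof.
case/andP=> S_le_k k_le_T.
have [B sBSc cardB] : exists2 B : {set T}, B \subset ~: S & #|B| = k - #|S|.
  by apply: exists_subset_card; rewrite leq_subLR cardsC.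
exists (S :|: B); first exact: subsetUl.
have /disjoint_setI0 SB0 : [disjoint S & B].
  by rewrite disjoint_sym disjoints_subset.
by rewrite cardsU SB0 cards0 subn0 cardB subnKC.
Qed.

Lemma not_imset_setC_card (T : finType) (f : T -> T) k :
  2 <= k <= #|T| -> ~ (forall A : {set T}, #|A| = k -> f @: A = ~: A).
Proof.
case/andP=> k_ge2 k_le_T f_compl.
have /card_gt0P [x _] : 0 < #|T| by rewrite (leq_trans _ k_le_T) // ltnW.
have [A sA cardA] : exists2 A : {set T}, [set x; f x] \subset A & #|A| = k.
  apply: exists_superset_card; rewrite k_le_T andbT (leq_trans _ k_ge2) //.
  by rewrite cards2; case: (_ != _).
have fxA : f x \in A by apply: (subsetP sA); rewrite !inE eqxx orbT.
have : f x \in f @: A by apply/imset_f/(subsetP sA); rewrite !inE eqxx.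
by rewrite f_compl // inE fxA.
Qed.

Theorem proposition6 (V : finType) (e : rel V) (n k : nat) :
  simple_graph e ->
  #|V| = n -> 2 < n -> ~~ odd n -> k = n./2 ->
  ~ (exists phi : {perm V}, is_graph_aut e phi /\
       forall A : {set V}, ksubset k A -> iota_map phi A = compl_map A).
Proof.
move=> _ cardV n_gt2 n_even ->.
have k_ge2 : 2 <= n./2.
  rewrite geq_half_double; have : n != 3 by apply: contraNneq n_even => ->.
  by case: n n_gt2 {cardV n_even} => [|[|[|[|]]]].
have k_le_n : n./2 <= #|V| by rewrite cardV -{2}(even_halfK n_even) -addnn leq_addr.
case=> phi [_ phi_compl]; apply: (@not_imset_setC_card _ phi n./2).
  by rewrite k_ge2 k_le_n.
by move=> A cardA; apply: phi_compl; rewrite /ksubset cardA.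
Qed.
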